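(* Let $p$ be a prime, let $\Gamma\subsetneq\mathbb{F}_p^*$ be a proper multiplicative subgroup, and let $A,B\subseteq\mathbb{F}_p$ be two sets with $A+B\subseteq\Gamma\sqcup\{0\}$. Then $|A||B|<4p$. *)

From mathcomp Require Import all_boot all_algebra all_fingroup.
Set Implicit Arguments. Unset Strict Implicit. Unset Printing Implicit Defensive.

From mathcomp Require Import all_boot all_algebra all_fingroup.
From mathcomp Require Import zify ring.
Import GRing.Theory.

Set Implicit Arguments.
Unset Strict Implicit.
Unset Printing Implicit Defensive.

(* Let d = [F^* : Gamma] and, for x in F, let N(x) = #{b in B | x + b <> 0}
   and P(x) = #{(b, b') in B^2 | x + b, x + b' <> 0, (x + b)/(x + b') in Gamma}.
   Sorting the elements x + b into the d cosets of Gamma, Cauchy-Schwarz gives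
   N(x)^2 <= d P(x).  For b <> b' the map x |-> (x + b)/(x + b') is injective
   and never takes the value 1, so it lands in Gamma at most
   |Gamma| - 1 = (|F| - 1)/d - 1 times; summing over pairs,
   d * sum_x P(x) <= sum_x N(x)^2 + |B| (d - 1) |F|.  For a in A all the
   ratios lie in Gamma, so P(a) = N(a)^2, and comparing the two bounds leaves
   sum_(a in A) N(a)^2 <= |B| |F| once d >= 2.  With N(a) >= |B| - 1 this reads
   |A| (|B| - 1)^2 <= |B| |F|, which forces |A| |B| < 4 |F|. *)

Lemma sqr_sum_le_card_sum_sqr (I : finType) (X : {pred I}) (c : I -> nat) :
  ((\sum_(i in X) c i) ^ 2 <= #|X| * \sum_(i in X) c i ^ 2)%N.
Proof.
rewrite -(leq_pmul2l (isT : 0 < 2)%N) -mulnn big_distrl big_distrr /=.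
have -> : (2 * (#|X| * \sum_(i in X) c i ^ 2) =
           \sum_(i in X) \sum_(j in X) (c i ^ 2 + c j ^ 2))%N.
  rewrite mul2n -addnn {1}big_distrr -sum_nat_const -big_split /=.
  by apply: eq_bigr => i _; rewrite big_split /= sum_nat_const.
apply: leq_sum => i _; rewrite big_distrr big_distrr /=.
by apply: leq_sum => j _; exact: nat_Cauchy.
Qed.

Lemma sqr_card_le_card_fiber_pairs (T I : finType) (S : {set T}) (R : {set I}) (f : T -> I) :
  {in S, forall s, f s \in R} ->
  (#|S| ^ 2 <= #|R| * #|[set st in setX S S | f st.1 == f st.2]|)%N.
Proof.
move=> fSR; pose fiber i := [set s in S | f s == i].
have cardS : #|S| = (\sum_(i in R) #|fiber i|)%N.
  rewrite -sum1_card (partition_big f (mem R)) //=.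
  by apply: eq_bigr => i _; rewrite -sum1dep_card.
have cardPairs :
    #|[set st in setX S S | f st.1 == f st.2]| = (\sum_(i in R) #|fiber i| ^ 2)%N.
  rewrite -sum1_card (partition_big (fun st => f st.1) (mem R)) /=; last first.
    by move=> [s t]; rewrite !inE => /andP[/andP[/fSR]].
  apply: eq_bigr => i _; rewrite -mulnn -cardsX -sum1_card; apply: eq_bigl => -[s t].
  rewrite !inE /=; case: (f s =P i) => [<-|_]; last by rewrite !andbF.
  by rewrite !andbT (eq_sym (f t)) andbA.
rewrite cardS cardPairs; exact: sqr_sum_le_card_sum_sqr.
Qed.

Lemma double_count_card (T U : finType) (X : {set U}) (r : T -> U -> bool) :
  (\sum_t #|[set u in X | r t u]| = \sum_(u in X) #|[set t | r t u]|)%N.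
Proof.
under eq_bigr do rewrite -sum1dep_card big_mkcond.
rewrite exchange_big [RHS]big_mkcond; apply: eq_bigr => u _.
case: (u \in X); last by rewrite big1.
by rewrite -sum1dep_card [RHS]big_mkcond.
Qed.

Lemma mul_lt4_of_mul_sqr_predn_le a b q :
  (0 < q)%N -> (a <= q)%N -> (a * (b - 1) ^ 2 <= b * q)%N -> (a * b < 4 * q)%N.
Proof.
move=> q_gt0 le_aq; have [le_b2 _|lt2b] := leqP b 2; first nia.
have [-> _|a_gt0 le_sq] := posnP a; first nia.
have lt_sq : (b * b < 4 * (b - 1) ^ 2)%N by nia.
rewrite -(ltn_pmul2r (ltnW (ltnW lt2b))); nia.
Qed.

Section ShiftedCosets.
Variables (F : finFieldType) (Gamma : {group {unit F}}).
Local Open Scope ring_scope.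

(* Junk value 1 at y = 0. *)
Definition unit_of (y : F) : {unit F} := insubd (1%g : {unit F}) y.

Lemma val_unit_of y : y != 0 -> val (unit_of y) = y.
Proof. by move=> y0; rewrite insubdK // unitfE. Qed.

Lemma unit_of_div y z :
  y != 0 -> z != 0 -> unit_of (y / z) = (unit_of y * (unit_of z)^-1)%g.
Proof.
move=> y0 z0; apply: val_inj.
by rewrite FinRing.val_unitM FinRing.val_unitV !val_unit_of // mulf_neq0 ?invr_eq0.
Qed.

Definition shift_equiv x b b' :=
  [&& x + b != 0, x + b' != 0 & unit_of ((x + b) / (x + b')) \in Gamma].

Lemma shift_equiv_refl x b : shift_equiv x b b = (x + b != 0).
Proof.
rewrite /shift_equiv; have [//|xb0] := eqVneq (x + b) 0.
rewrite divff // (_ : unit_of 1 = 1%g) ?group1 //.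
by apply: val_inj; rewrite val_unit_of ?oner_eq0.
Qed.

Lemma card_shift_equiv_lt b b' :
  b != b' -> (#|[set x | shift_equiv x b b']| < #|Gamma|)%N.
Proof.
move=> neq_bb'; pose ratio x := unit_of ((x + b) / (x + b')).
have ratio_inj : {in [set x | shift_equiv x b b'] &, injective ratio}.
  move=> x y; rewrite !inE => /and3P[xb0 xb'0 _] /and3P[yb0 yb'0 _] /(congr1 val).
  rewrite /ratio !val_unit_of ?mulf_neq0 ?invr_eq0 // => /eqP; rewrite eqr_div // => /eqP e.
  have : (x - y) * (b' - b) = (x + b) * (y + b') - (y + b) * (x + b') by ring.
  rewrite e subrr => /eqP.
  by rewrite mulf_eq0 !subr_eq0 (eq_sym b') (negbTE neq_bb') orbF => /eqP.
rewrite -(card_in_imset ratio_inj) (cardsD1 1%g Gamma) group1 ltnS subset_leq_card //.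
apply/subsetP => _ /imsetP[x + ->]; rewrite inE => /and3P[xb0 xb'0 inG].
rewrite !inE inG andbT; apply/eqP => /(congr1 val).
rewrite val_unit_of ?mulf_neq0 ?invr_eq0 // => /(canRL (divfK xb'0)).
by rewrite mul1r => /addrI /eqP; rewrite (negbTE neq_bb').
Qed.

Lemma card_nonzero_shift_pair b b' : b != b' ->
  #|[set x : F | (x + b != 0) && (x + b' != 0)]|.+2 = #|F|.
Proof.
move=> neq_bb'; rewrite -(cardsC [set - b; - b']) cards2 eqr_opp neq_bb' addnC.
rewrite addn2; congr (_.+2); apply: eq_card => x.
by rewrite !inE !addr_eq0 negb_or.
Qed.

Local Notation d := #|[set: {unit F}] : Gamma|%g.

Lemma index_card_shift_equiv_le b b' :
  (d * #|[set x | shift_equiv x b b']|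
     <= #|[set x : F | (x + b != 0) && (x + b' != 0)]%R| + (b == b') * ((d - 1) * #|F|))%N.
Proof.
have [<-|neq_bb'] := eqVneq b b'.
  have -> : [set x | shift_equiv x b b] = [set x | (x + b != 0) && (x + b != 0)].
    by apply/setP => x; rewrite !inE shift_equiv_refl andbb.
  have d_gt0 := indexg_gt0 [set: {unit F}] Gamma.
  rewrite mul1n -{1}(subnK d_gt0) mulnDl mul1n addnC leq_add2l leq_mul2l.
  by rewrite max_card orbT.
have lt_Gamma := card_shift_equiv_lt neq_bb'.
have card_pair := card_nonzero_shift_pair neq_bb'.
have lagrange : (#|Gamma| * d)%N = #|F|.-1.
  by rewrite Lagrange ?subsetT // card_finField_unit.
have d_gt0 := indexg_gt0 [set: {unit F}] Gamma.
rewrite mul0n addn0; nia.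
Qed.

Variable B : {set F}.

Definition nonzero_shifts x := [set b in B | x + b != 0].
Definition equiv_pairs x := [set bb in setX B B | shift_equiv x bb.1 bb.2].

Lemma sqr_card_nonzero_shifts x :
  (#|nonzero_shifts x| ^ 2)%N
  = #|[set bb in setX B B | (x + bb.1 != 0) && (x + bb.2 != 0)]%R|.
Proof.
rewrite -mulnn -cardsX; apply: eq_card => -[b b'].
by rewrite !inE /= andbACA.
Qed.

Lemma sqr_card_nonzero_shifts_le x : (#|nonzero_shifts x| ^ 2 <= d * #|equiv_pairs x|)%N.
Proof.
pose coset b := (Gamma :* unit_of (x + b))%g.
have := @sqr_card_le_card_fiber_pairs _ _ (nonzero_shifts x) (rcosets Gamma [set: {unit F}]) coset.
rewrite (_ : [set _ in _ | _] = equiv_pairs x).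
  by apply=> b _; apply/rcosetsP; exists (unit_of (x + b)); rewrite ?inE.
apply/setP => -[b b']; rewrite !inE /= /shift_equiv.
have [|xb0] := eqVneq (x + b) 0; first by rewrite !andbF.
have [|xb'0] := eqVneq (x + b') 0; first by rewrite !andbF.
rewrite !andbT unit_of_div // /coset; congr (_ && _); rewrite -mem_rcoset.
by apply/eqP/idP => [<-|/rcoset_eqP //]; rewrite rcoset_refl.
Qed.

Lemma card_equiv_pairs_full x :
    {in B, forall b, x + b != 0 -> unit_of (x + b) \in Gamma} ->
  #|equiv_pairs x| = (#|nonzero_shifts x| ^ 2)%N.
Proof.
move=> inGamma; rewrite sqr_card_nonzero_shifts; apply: eq_card => -[b b'].
rewrite !inE /= /shift_equiv; case/boolP: ((b \in B) && (b' \in B)) => //= /andP[Bb Bb'].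
case: (x + b =P 0) => //= /eqP xb0; case: (x + b' =P 0) => //= /eqP xb'0.
by rewrite unit_of_div // groupM ?groupV ?inGamma.
Qed.

Lemma card_nonzero_shifts_ge x : (#|B| <= #|nonzero_shifts x|.+1)%N.
Proof.
have sub : B \subset - x |: nonzero_shifts x.
  by apply/subsetP => b Bb; rewrite !inE Bb /= addrC addr_eq0 orbN.
by rewrite (leq_trans (subset_leq_card sub)) // cardsU1 -add1n leq_add2r leq_b1.
Qed.

Lemma index_sum_card_equiv_pairs_le :
  (d * \sum_x #|equiv_pairs x|
     <= \sum_x #|nonzero_shifts x| ^ 2 + #|B| * ((d - 1) * #|F|))%N.
Proof.
have diag : (\sum_(bb in setX B B) (bb.1 == bb.2) * ((d - 1) * #|F|)
             = #|B| * ((d - 1) * #|F|))%N.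
  rewrite -big_distrl /= -sum1_card; congr (_ * _)%N.
  rewrite (eq_bigl (fun bb => (bb.1 \in B) && (bb.2 \in B))); last by move=> [b b']; rewrite inE.
  rewrite -(pair_big (mem B) (mem B) (fun b b' => (b == b' : nat))) /= -sum1_card.
  apply: eq_bigr => b Bb; rewrite (bigD1 b) //= eqxx big1 // => b' /andP[_].
  by rewrite eq_sym => /negbTE ->.
under [X in (_ <= X + _)%N]eq_bigr do rewrite sqr_card_nonzero_shifts.
rewrite /equiv_pairs !(@double_count_card _ _ (setX B B)) big_distrr -diag -big_split /=.
by apply: leq_sum => -[b b'] _; apply: index_card_shift_equiv_le.
Qed.

Lemma sum_sqr_card_nonzero_shifts_le (A : {set F}) :
    (1 < d)%N -> {in A & B, forall a b, a + b != 0 -> unit_of (a + b) \in Gamma} ->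
  (\sum_(a in A) #|nonzero_shifts a| ^ 2 <= #|B| * #|F|)%N.
Proof.
move=> d_gt1 sumAB; have key := index_sum_card_equiv_pairs_le.
rewrite [X in (_ * X <= _)%N](bigID (mem A)) [X in (_ <= X + _)%N](bigID (mem A)) /= in key.
have onA : (\sum_(a in A) #|equiv_pairs a| = \sum_(a in A) #|nonzero_shifts a| ^ 2)%N.
  by apply: eq_bigr => a Aa; apply: card_equiv_pairs_full => b Bb; apply: sumAB.
have offA : (\sum_(x | x \notin A) #|nonzero_shifts x| ^ 2
              <= d * \sum_(x | x \notin A) #|equiv_pairs x|)%N.
  by rewrite big_distrr; apply: leq_sum => x _; apply: sqr_card_nonzero_shifts_le.
rewrite mulnDr onA in key.
have := leq_trans key (leq_add (leq_add (leqnn _) offA) (leqnn _)).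
rewrite addnAC leq_add2r => le_dSA.
rewrite -(leq_pmul2l (_ : 0 < d - 1)%N) ?subn_gt0 //.
by rewrite mulnBl mul1n leq_subLR mulnCA.
Qed.

Theorem card_mul_lt_of_sumset_sub_subgroup (A : {set F}) :
    Gamma \proper [set: {unit F}] ->
    {in A & B, forall a b, a + b != 0 -> unit_of (a + b) \in Gamma} ->
  (#|A| * #|B| < 4 * #|F|)%N.
Proof.
move=> proper_Gamma sumAB.
have d_gt1 : (1 < d)%N.
  rewrite ltn_neqAle indexg_gt0 andbT eq_sym indexg_eq1.
  by move: proper_Gamma; rewrite properE => /andP[].
have F_gt0 : (0 < #|F|)%N by apply/card_gt0P; exists 0.
apply: mul_lt4_of_mul_sqr_predn_le F_gt0 (max_card A) _.
apply: leq_trans _ (sum_sqr_card_nonzero_shifts_le d_gt1 sumAB).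
rewrite -sum_nat_const; apply: leq_sum => a _; rewrite leq_sqr leq_subLR add1n.
exact: card_nonzero_shifts_ge.
Qed.

End ShiftedCosets.

Local Open Scope ring_scope.

Theorem lemma5 (p : nat) (hp : prime p)
  (Gamma : {group {unit 'F_p}})
  (hG : Gamma \proper [set: {unit 'F_p}])
  (A B : {set 'F_p})
  (hAB : forall a b, a \in A -> b \in B ->
     a + b = 0 \/ exists2 u : {unit 'F_p}, u \in Gamma & val u = a + b) :
  (#|A| * #|B| < 4 * p)%N.
Proof.
have sumAB : {in A & B, forall a b, a + b != 0 -> unit_of (a + b) \in Gamma}.
  move=> a b Aa Bb ab_neq0; have [/eqP|[u Gamma_u <-]] := hAB a b Aa Bb.
    by rewrite (negbTE ab_neq0).
  by rewrite /unit_of valKd.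
by have := card_mul_lt_of_sumset_sub_subgroup hG sumAB; rewrite card_Fp.
Qed.
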